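(* Let $p$ be a prime, $R=\mathbb{F}_p[x,x^{-1}]$, $n\ge1$. Let $U$ and $U_m$ ($m\ge1$) be $R$-submodules of $R^n$ with $U\subset U_m$ and ${\rm rk}(U)={\rm rk}(U_m)$ for all $m$, and suppose $U_m\to U$. Then $U_m=U$ for all sufficiently large $m$.
   Context: The rank ${\rm rk}$ of a finitely generated $R$-module is the maximal number of elements freely generating a free submodule ($0$ if none). Convergence $U_m\to U$ of subsets of $R^n$ means that for every $v\in R^n$, the truth value of $v\in U_m$ is eventually equal to that of $v\in U$. *)

From HB Require Import structures.
From mathcomp Require Import all_boot all_order all_algebra.
From mathcomp Require Import boolp.
Set Implicit Arguments. Unset Strict Implicit. Unset Printing Implicit Defensive.
Import GRing.Theory.
Local Open Scope ring_scope.

(* R = F_p[x, x^{-1}] is realised as the subring of the fraction field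
   K = F_p(x) of {poly 'F_p} consisting of the elements g / x^k. *)
Definition Kfrac (p : nat) := {fraction {poly 'F_p}}.
Notation "x %:F" := (@FracField.tofrac _ x) : ring_scope.

Definition laurent (p : nat) (f : Kfrac p) : Prop :=
  exists (g : {poly 'F_p}) (k : nat), f = g%:F / ('X ^+ k)%:F.

Definition laurent_vec (p n : nat) (v : 'rV[Kfrac p]_n) : Prop :=
  forall i, laurent (v 0 i).

Definition is_submodule (p n : nat) (U : 'rV[Kfrac p]_n -> Prop) : Prop :=
  [/\ forall v, U v -> laurent_vec v,
      U 0,
      forall u v, U u -> U v -> U (u + v)
    & forall (r : Kfrac p) v, laurent r -> U v -> U (r *: v)].

Definition free_family_in (p n : nat) (U : 'rV[Kfrac p]_n -> Prop) (k : nat)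
  : Prop :=
  exists v : 'I_k -> 'rV[Kfrac p]_n,
    (forall i, U (v i)) /\
    (forall c : 'I_k -> Kfrac p, (forall i, laurent (c i)) ->
        \sum_(i < k) c i *: v i = 0 -> forall i, c i = 0).

(* rank: the maximal number of elements of U freely generating a free
   submodule (0 if none).  Any R-independent family in R^n has at most n
   elements, so the maximum is taken over k <= n. *)
Definition rk (p n : nat) (U : 'rV[Kfrac p]_n -> Prop) : nat :=
  \max_(k < n.+1 | `[< free_family_in U k >]) k.

Definition converges (p n : nat) (Um : nat -> 'rV[Kfrac p]_n -> Prop)
  (U : 'rV[Kfrac p]_n -> Prop) : Prop :=
  forall v, laurent_vec v -> exists M, forall m, (M <= m)%N -> (Um m v <-> U v).

(* Let r = rk U and let u_1, ..., u_r be a free family in U.  Every U_m has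
   rank r and contains the u_i, so every U_m lies in the F_p(x)-span W of the
   u_i.  Clearing denominators in Cramer's rule gives a polynomial h with
   h(0) <> 0 and h (W ∩ R^n) ⊆ U (powers of x are units of R).  Since
   R/hR = F_p[x]/(h) is finite, W ∩ R^n is a finite union of classes
   modulo h (W ∩ R^n), and two elements of a class differ by an element of U.
   If a class contains some v ∉ U, then as soon as v ∉ U_m the class does not
   meet U_m at all, because w ∈ U_m in the class would give v = w - (w - v)
   ∈ U_m.  So for m large every element of U_m lies in U. *)

From HB Require Import structures.
From mathcomp Require Import all_boot all_order all_algebra.
From mathcomp Require Import boolp.
Set Implicit Arguments. Unset Strict Implicit. Unset Printing Implicit Defensive.
Import GRing.Theory.
Local Open Scope ring_scope.

Section FractionField.
Variable R : idomainType.
Local Open Scope quotient_scope.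

Lemma frac_denom (x : {fraction R}) :
  exists b : R, b != 0 /\ exists a : R, b%:F * x = a%:F.
Proof.
have ex : x = (repr x).1%:F / (repr x).2%:F.
  rewrite -[in LHS](reprK x) [RHS]piE; apply/eqmodP.
  rewrite /= FracField.equivfE /FracField.mulf /FracField.invf.
  by rewrite !numden_Ratio ?oner_neq0 ?mul1r ?mulr1 ?(denom_ratioP (repr x)) // mulrC.
exists (repr x).2; split; first exact: denom_ratioP.
by exists (repr x).1; rewrite {2}ex mulrC divfK // tofrac_eq0 denom_ratioP.
Qed.

Lemma common_denom (I : finType) (c : I -> {fraction R}) :
  exists2 d : R, d != 0 & forall i, exists a : R, d%:F * c i = a%:F.
Proof.
have [b hb] := fin_all_exists (fun i => frac_denom (c i)).
exists (\prod_i b i); first by apply/prodf_neq0 => i _; case: (hb i).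
move=> i; have [_ [a ea]] := hb i.
exists ((\prod_(j | j != i) b j) * a).
by rewrite (bigD1 i) //= !tofracM mulrAC ea mulrC.
Qed.

End FractionField.

Lemma row_free_col_mx (F : fieldType) m n (A : 'M[F]_(m, n)) (w : 'rV_n) :
  row_free A -> ~~ (w <= A)%MS -> row_free (col_mx A w).
Proof.
move=> fA nwA; have ltA : (A < col_mx A w)%MS.
  rewrite ltmxE -!addsmxE addsmxSl /=.
  by apply: contra nwA; apply: submx_trans (addsmxSr _ _).
have := rank_ltmx ltA; rewrite (eqP fA) => ltr.
by rewrite /row_free eqn_leq rank_leq_row [in X in (X <= _)%N]addn1.
Qed.

Section Laurent.
Variable p : nat.
Local Notation K := (Kfrac p).
Local Notation P := {poly 'F_p}.

Lemma laurent_poly (g : P) : laurent (g%:F : K).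
Proof. by exists g, 0%N; rewrite expr0 tofrac1 divr1. Qed.

Lemma laurent0 : laurent (0 : K).
Proof. by have := laurent_poly 0; rewrite tofrac0. Qed.

Lemma laurentD (a b : K) : laurent a -> laurent b -> laurent (a + b).
Proof.
move=> [g [k ->]] [g' [k' ->]]; exists (g * 'X^k' + g' * 'X^k), (k + k')%N.
by rewrite addf_div ?tofrac_eq0 ?expf_neq0 ?polyX_eq0 // tofracD !tofracM exprD tofracM.
Qed.

Lemma laurentN (a : K) : laurent a -> laurent (- a).
Proof. by move=> [g [k ->]]; exists (- g), k; rewrite tofracN mulNr. Qed.

Lemma laurentM (a b : K) : laurent a -> laurent b -> laurent (a * b).
Proof.
move=> [g [k ->]] [g' [k' ->]]; exists (g * g'), (k + k')%N.
by rewrite mulf_div exprD !tofracM.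
Qed.

Lemma laurent_invXn k : laurent ((('X : P) ^+ k)%:F^-1 : K).
Proof. by exists 1, k; rewrite tofrac1 mul1r. Qed.

Lemma laurent_sum (I : Type) (r : seq I) (Q : pred I) (F : I -> K) :
  (forall i, Q i -> laurent (F i)) -> laurent (\sum_(i <- r | Q i) F i).
Proof. by move=> hF; elim/big_ind: _ => //; [exact: laurent0 | exact: laurentD]. Qed.

Lemma laurent_vecB n (u v : 'rV[K]_n) :
  laurent_vec u -> laurent_vec v -> laurent_vec (u - v).
Proof. by move=> hu hv i; rewrite !mxE; apply: laurentD (laurentN _). Qed.

Lemma laurent_modp (h : P) (f : K) : ~~ root h 0 -> laurent f ->
  exists (r : P) (z : K), [/\ (size r < size h)%N, laurent z & f = r%:F + h%:F * z].
Proof.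
move=> h0 [g [k ->]].
have /Bezout_eq1_coprimepP [[u1 u2] /= Eu] : coprimep h ('X ^+ k).
  by rewrite coprimep_expr // coprimepX.
have nzh : h != 0 by apply: contraNneq h0 => ->; rewrite root0.
have nzX : ('X ^+ k)%:F != 0 :> K by rewrite tofrac_eq0 expf_neq0 ?polyX_eq0.
set q := g * u2.
have Eg : g = (q %% h + h * (q %/ h)) * 'X^k + h * (g * u1).
  rewrite (addrC (q %% h)) (mulrC h) -divp_eq /q -[g in LHS]mulr1 -Eu.
  by rewrite mulrDr addrC [h * _]mulrC !mulrA.
exists (q %% h), ((g * u1)%:F / ('X ^+ k)%:F + (q %/ h)%:F); split.
- by rewrite ltn_modp.
- by apply: laurentD (laurent_poly _); exists (g * u1), k.
rewrite {1}Eg tofracD tofracM mulrDl mulfK // !(tofracD, tofracM).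
by rewrite mulrDr addrA addrAC !mulrA.
Qed.

(* A residue class modulo h is indexed by the coefficient rows of the residues
   of the entries; the index type 'M['F_p]_(n, size h) is finite. *)
Definition residue_vec n d (t : 'M['F_p]_(n, d)) : 'rV[K]_n :=
  \row_i (rVpoly (row i t))%:F.

Definition residue_class n (h : P) (t : 'M['F_p]_(n, size h)) (v : 'rV[K]_n) :=
  exists z, laurent_vec z /\ v = residue_vec t + h%:F *: z.
Arguments residue_class {n} h t v.

Lemma laurent_vec_residue n (h : P) (v : 'rV[K]_n) : ~~ root h 0 ->
  laurent_vec v -> exists t, residue_class h t v.
Proof.
move=> h0 hv.
have /fin_all_exists [r hr] := fun i => laurent_modp h0 (hv i).
have /fin_all_exists [z hz] := hr.
exists (\matrix_i poly_rV (r i)), (\row_i z i); split.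
  by move=> i; rewrite mxE; case: (hz i).
apply/rowP => i; have [/ltnW sr _ ->] := hz i.
by rewrite !mxE rowK poly_rV_K.
Qed.

Section Submodule.
Variables (n : nat) (V : 'rV[K]_n -> Prop).
Hypothesis hV : is_submodule V.

Lemma submod_laurent v : V v -> laurent_vec v.
Proof. by case: hV => h _ _ _; apply: h. Qed.

Lemma submodZ r v : laurent r -> V v -> V (r *: v).
Proof. by case: hV => _ _ _; apply. Qed.

Lemma submod_sum (I : Type) (r : seq I) (Q : pred I) (F : I -> 'rV[K]_n) :
  (forall i, Q i -> V (F i)) -> V (\sum_(i <- r | Q i) F i).
Proof. by case: hV => _ V0 VD _ hF; elim/big_ind: _. Qed.

Lemma submodB u v : V u -> V v -> V (u - v).
Proof.
case: hV => _ _ VD _ hu hv; apply: VD hu _; rewrite -scaleN1r.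
by apply: submodZ hv; apply: laurentN; have := laurent_poly 1; rewrite tofrac1.
Qed.

End Submodule.

Section Rank.
Variable n : nat.
Local Notation vec := 'rV[K]_n.

Lemma free_family_row_free k (u : 'I_k -> vec) :
  (forall c : 'I_k -> K, (forall i, laurent (c i)) ->
     \sum_(i < k) c i *: u i = 0 -> forall i, c i = 0) ->
  row_free (\matrix_i u i).
Proof.
move=> free_u; apply: inj_row_free => v hv.
have [d nzd hd] := common_denom (fun i => v 0 i).
have hdv : forall i, laurent (d%:F * v 0 i).
  by move=> i; have [a ->] := hd i; apply: laurent_poly.
have /(free_u _ hdv) dv0 : \sum_(i < k) (d%:F * v 0 i) *: u i = 0.
  transitivity (d%:F *: (v *m \matrix_i u i)); last by rewrite hv scaler0.
  by rewrite mulmx_sum_row scaler_sumr; apply: eq_bigr => i _; rewrite rowK scalerA.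
apply/rowP => i; rewrite mxE; move/eqP: (dv0 i).
by rewrite mulf_eq0 tofrac_eq0 (negbTE nzd) => /eqP.
Qed.

Lemma row_free_free_family (V : vec -> Prop) k (A : 'M[K]_(k, n)) :
  row_free A -> (forall i, V (row i A)) -> free_family_in V k.
Proof.
move=> fA hA; exists (fun i => row i A); split=> // c _ hc i.
have : (\row_j c j) *m A = 0 *m A.
  by rewrite mul0mx mulmx_sum_row -[RHS]hc; apply: eq_bigr => j _; rewrite mxE.
by move/(row_free_inj fA)/rowP/(_ i); rewrite !mxE.
Qed.

Lemma free_family_rk (V : vec -> Prop) : free_family_in V (rk V).
Proof.
rewrite /rk; elim/big_ind: _ => [|k1 k2 h1 h2|k /asboolP //].
  by exists (fun=> 0); split=> [[]|c _ _ []].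
by rewrite /maxn; case: ltnP.
Qed.

Lemma leq_rk (V : vec -> Prop) k :
  (k <= n)%N -> free_family_in V k -> (k <= rk V)%N.
Proof.
rewrite -ltnS => kn hk.
exact: (@leq_bigmax_cond _ _ (fun k : 'I_n.+1 => k) (Ordinal kn) (asboolT hk)).
Qed.

Lemma rk_span (V : vec -> Prop) r (A : 'M[K]_(r, n)) : (rk V <= r)%N ->
  row_free A -> (forall i, V (row i A)) -> forall w, V w -> (w <= A)%MS.
Proof.
move=> hr fA hA w hw; apply/negPn/negP => nwA.
have fAw := row_free_col_mx fA nwA.
suff : (r + 1 <= rk V)%N by rewrite addn1 ltnNge hr.
apply: leq_rk; first by rewrite -(eqP fAw) rank_leq_col.
apply: row_free_free_family fAw _ => i.
rewrite -(splitK i); case: (split i) => j /=; first by rewrite rowKu.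
by rewrite rowKd (_ : row j w = w) //; apply/rowP => k; rewrite mxE (ord1 j).
Qed.

(* Cramer's rule: the coordinates v *m pinvmx A of v in the span of A have a
   common polynomial denominator d. *)
Lemma submod_denom (V : vec -> Prop) r (A : 'M[K]_(r, n)) :
  is_submodule V -> (forall i, V (row i A)) ->
  exists2 d : P, d != 0 & forall v, laurent_vec v -> (v <= A)%MS -> V (d%:F *: v).
Proof.
move=> hV hA.
have [d nzd hd] := common_denom (fun ij : 'I_n * 'I_r => pinvmx A ij.1 ij.2).
exists d => // v hv /mulmxKpV vA.
rewrite -{}vA scalemxAl scalemxAr mulmx_sum_row.
apply: submod_sum => // i _; apply: submodZ => //.
rewrite mxE; apply: laurent_sum => j _; rewrite mxE.
by apply: laurentM => //; have [a ->] := hd (j, i); apply: laurent_poly.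
Qed.

Lemma submod_denom_coprimeX (V : vec -> Prop) r (A : 'M[K]_(r, n)) :
  is_submodule V -> (forall i, V (row i A)) ->
  exists2 h : P, ~~ root h 0 &
    forall v, laurent_vec v -> (v <= A)%MS -> V (h%:F *: v).
Proof.
move=> hV hA; have [d nzd hd] := submod_denom hV hA.
have [a [h h0 Ed]] := multiplicity_XsubC d 0.
exists h => [|v hv sv]; first by rewrite nzd in h0.
have nzX : ('X ^+ a)%:F != 0 :> K by rewrite tofrac_eq0 expf_neq0 ?polyX_eq0.
have -> : h%:F *: v = ('X ^+ a)%:F^-1 *: (d%:F *: v).
  by rewrite scalerA Ed subr0 tofracM [_ * _%:F]mulrC mulKf.
exact: submodZ (laurent_invXn a) (hd v hv sv).
Qed.

Lemma residue_class_subr (V : vec -> Prop) r (A : 'M[K]_(r, n)) (h : P)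
    (t : 'M['F_p]_(n, size h)) v w :
  ~~ root h 0 -> (forall z, laurent_vec z -> (z <= A)%MS -> V (h%:F *: z)) ->
  (v <= A)%MS -> (w <= A)%MS -> residue_class h t v -> residue_class h t w ->
  V (w - v).
Proof.
move=> h0 hh sv sw [zv [hzv ev]] [zw [hzw ew]].
have ewv : w - v = h%:F *: (zw - zv).
  by rewrite ew ev scalerBr opprD addrACA subrr add0r.
have nzh : h%:F != 0 :> K.
  by rewrite tofrac_eq0; apply: contraNneq h0 => ->; rewrite root0.
rewrite ewv; apply: hh; first exact: laurent_vecB.
rewrite -(scalerK nzh (zw - zv)) -ewv; apply: scalemx_sub.
by apply: addmx_sub sw _; rewrite eqmx_opp.
Qed.

End Rank.

End Laurent.

Arguments residue_class {p n} h t v.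

Section Stabilization.
Variables (p n : nat) (U : 'rV[Kfrac p]_n -> Prop)
  (Um : nat -> 'rV[Kfrac p]_n -> Prop).
Hypotheses (hUm : forall m, (1 <= m)%N -> is_submodule (Um m))
  (sUUm : forall m, (1 <= m)%N -> forall v, U v -> Um m v)
  (hconv : converges Um U).

Lemma eventually_class_sub (C : 'rV[Kfrac p]_n -> Prop) :
  (forall v, C v -> laurent_vec v) -> (forall v w, C v -> C w -> U (w - v)) ->
  exists M, forall m, (1 <= m)%N -> (M <= m)%N ->
    forall w, Um m w -> C w -> U w.
Proof.
move=> lC dC; case: (pselect (exists v, C v /\ ~ U v)) => [[v [Cv nUv]]|noC].
  have [M hM] := hconv (lC v Cv).
  exists M => m hm hMm w hw Cw; exfalso; apply/nUv/(hM m hMm).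
  have := submodB (hUm hm) hw (sUUm hm (dC _ _ Cv Cw)).
  by rewrite subKr.
exists 0%N => m _ _ w _ Cw; apply: contrapT => nUw.
by apply: noC; exists w.
Qed.

Lemma eventually_eq_of_classes (T : finType) (C : T -> 'rV[Kfrac p]_n -> Prop) :
  (forall t v, C t v -> laurent_vec v) ->
  (forall t v w, C t v -> C t w -> U (w - v)) ->
  (forall m w, (1 <= m)%N -> Um m w -> exists t, C t w) ->
  exists M, forall m, (M <= m)%N -> Um m = U.
Proof.
move=> lC dC coverC.
have /fin_all_exists [M hM] := fun t => eventually_class_sub (lC t) (dC t).
exists (maxn 1 (\max_t M t)) => m; rewrite geq_max => /andP[hm hMm].
apply: funext => w; apply: propext; split=> [hw|]; last exact: sUUm.
have [t Ctw] := coverC m w hm hw.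
have hMt : (M t <= m)%N := leq_trans (leq_bigmax t) hMm.
exact: hM t m hm hMt w hw Ctw.
Qed.

End Stabilization.

Theorem lemma6p15 (p n : nat) (U : 'rV[Kfrac p]_n -> Prop)
  (Um : nat -> 'rV[Kfrac p]_n -> Prop) :
  prime p -> (1 <= n)%N ->
  is_submodule U ->
  (forall m, (1 <= m)%N -> is_submodule (Um m)) ->
  (forall m, (1 <= m)%N -> forall v, U v -> Um m v) ->
  (forall m, (1 <= m)%N -> rk U = rk (Um m)) ->
  converges Um U ->
  exists M, forall m, (M <= m)%N -> Um m = U.
Proof.
move=> _ _ hU hUm sUUm hrk hconv.
have [u [hu free_u]] := free_family_rk U.
set A := \matrix_i u i.
have fA : row_free A := free_family_row_free free_u.
have hA : forall i, U (row i A) by move=> i; rewrite rowK.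
have spanUm m w : (1 <= m)%N -> Um m w -> (w <= A)%MS.
  move=> hm; apply: (rk_span _ fA) => [|i]; first by rewrite -(hrk m hm).
  exact: sUUm m hm _ (hA i).
have [h h0 hh] := submod_denom_coprimeX hU hA.
pose C (t : 'M['F_p]_(n, size h)) w :=
  [/\ (w <= A)%MS, laurent_vec w & residue_class h t w].
apply: (@eventually_eq_of_classes _ _ _ _ hUm sUUm hconv _ C).
- by move=> t v [].
- by move=> t v w [sv _ cv] [sw _ cw]; apply: residue_class_subr h0 hh sv sw cv cw.
- move=> m w hm hw; have lw := submod_laurent (hUm m hm) hw.
  have [t ct] := laurent_vec_residue h0 lw.
  by exists t; split=> //; exact: spanUm hm hw.
Qed.
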